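(* Let $(D, \{ \prec_\alpha, \succ_\alpha, \curlyvee_{\alpha, \beta} \}_{\alpha, \beta \in \Omega})$ be an NS-family algebra. Then $(D, \{ \ast_{\alpha, \beta} \}_{\alpha, \beta \in \Omega})$ is an $\Omega$-associative algebra, where $x \ast_{\alpha, \beta} y = x \prec_\beta y + x \succ_\alpha y + x \curlyvee_{\alpha, \beta} y$.
   Context: $\Omega$ is a semigroup. An NS-family algebra is a vector space $D$ with bilinear maps $\{ \prec_\alpha, \succ_\alpha, \curlyvee_{\alpha, \beta}\}_{\alpha, \beta \in \Omega}$ such that for all $x,y,z$, $\alpha,\beta,\gamma$: (1) $(x \prec_\alpha y) \prec_\beta z = x \prec_{\alpha \beta} ( y \prec_\beta z + y \succ_\alpha z + y \curlyvee_{\alpha, \beta} z)$; (2) $(x \succ_\alpha y) \prec_\beta z = x \succ_\alpha (y \prec_\beta z)$; (3) $(x \prec_\beta y + x \succ_\alpha y + x \curlyvee_{\alpha, \beta} y) \succ_{\alpha \beta} z = x \succ_\alpha (y \succ_\beta z)$; (4) $( x \prec_\beta y + x \succ_\alpha y + x \curlyvee_{\alpha, \beta} y ) \curlyvee_{\alpha \beta, \gamma} z + (x \curlyvee_{\alpha, \beta} y) \prec_\gamma z = x \succ_\alpha (y \curlyvee_{\beta, \gamma} z) + x \curlyvee_{\alpha, \beta \gamma} ( y \prec_\gamma z + y \succ_\beta z + y \curlyvee_{\beta, \gamma} z )$. An $\Omega$-associative algebra is a vector space $B$ with bilinear maps $\{\cdot_{\alpha,\beta}\}_{\alpha,\beta\in\Omega}$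 such that $(a \cdot_{\alpha , \beta} b) \cdot_{\alpha \beta, \gamma} c = a \cdot_{\alpha, \beta \gamma} (b \cdot_{\beta, \gamma} c)$ for all $a,b,c\in B$, $\alpha,\beta,\gamma\in\Omega$. *)

From HB Require Import structures.
From mathcomp Require Import all_boot all_algebra.
Set Implicit Arguments. Unset Strict Implicit. Unset Printing Implicit Defensive.
Import GRing.Theory.
Local Open Scope ring_scope.

Definition semigroup_assoc (Omega : Type) (mul : Omega -> Omega -> Omega) :=
  forall a b c, mul (mul a b) c = mul a (mul b c).

Definition bilinear_map (K : pzRingType) (D : lmodType K) (f : D -> D -> D) :=
  (forall y, linear (fun x => f x y)) /\ (forall x, linear (f x)).

Definition is_NS_family_algebra (K : pzRingType) (D : lmodType K)
  (Omega : Type) (mul : Omega -> Omega -> Omega)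
  (prec succ : Omega -> D -> D -> D) (vee : Omega -> Omega -> D -> D -> D) :=
  [/\ (forall a, bilinear_map (prec a)),
      (forall a, bilinear_map (succ a)),
      (forall a b, bilinear_map (vee a b)) &
  [/\
      (forall x y z a b,
         prec b (prec a x y) z
         = prec (mul a b) x (prec b y z + succ a y z + vee a b y z)),
      (forall x y z a b,
         prec b (succ a x y) z = succ a x (prec b y z)),
      (forall x y z a b,
         succ (mul a b) (prec b x y + succ a x y + vee a b x y) z
         = succ a x (succ b y z)) &
      (forall x y z a b c,
         vee (mul a b) c (prec b x y + succ a x y + vee a b x y) z
         + prec c (vee a b x y) z
         = succ a x (vee b c y z)
           + vee a (mul b c) x (prec c y z + succ b y z + vee b c y z))]].

Definition is_Omega_associative_algebra (K : pzRingType) (D : lmodType K)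
  (Omega : Type) (mul : Omega -> Omega -> Omega)
  (dot : Omega -> Omega -> D -> D -> D) :=
  (forall a b, bilinear_map (dot a b)) /\
  (forall x y z a b c,
     dot (mul a b) c (dot a b x y) z = dot a (mul b c) x (dot b c y z)).

Definition NS_star (K : pzRingType) (D : lmodType K) (Omega : Type)
  (prec succ : Omega -> D -> D -> D) (vee : Omega -> Omega -> D -> D -> D)
  (a b : Omega) (x y : D) : D :=
  prec b x y + succ a x y + vee a b x y.

From HB Require Import structures.
From mathcomp Require Import all_boot all_algebra.
Set Implicit Arguments. Unset Strict Implicit. Unset Printing Implicit Defensive.
Import GRing.Theory.
Local Open Scope ring_scope.

Section LinearMaps.
Variables (R : pzRingType) (U V : lmodType R).

Lemma linear_addf (f g : U -> V) :
  linear f -> linear g -> linear (fun u => f u + g u).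
Proof. by move=> lin_f lin_g k u v; rewrite lin_f lin_g scalerDr addrACA. Qed.

Lemma linear_additive (f : U -> V) : linear f -> {morph f : u v / u + v}.
Proof. by move=> lin_f u v; have := lin_f 1 u v; rewrite !scale1r. Qed.

End LinearMaps.

Section BilinearMaps.
Variables (R : pzRingType) (U : lmodType R).

Lemma bilinear_map_add (f g : U -> U -> U) :
  bilinear_map f -> bilinear_map g -> bilinear_map (fun x y => f x y + g x y).
Proof.
move=> [f_l f_r] [g_l g_r]; split=> z.
- exact: linear_addf (f_l z) (g_l z).
- exact: linear_addf (f_r z) (g_r z).
Qed.

Lemma bilinear_mapDl (f : U -> U -> U) :
  bilinear_map f -> forall z, {morph f^~ z : x y / x + y}.
Proof. by move=> [f_l _] z; exact: linear_additive. Qed.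

Lemma bilinear_mapDr (f : U -> U -> U) :
  bilinear_map f -> forall x, {morph f x : y z / y + z}.
Proof. by move=> [_ f_r] x; exact: linear_additive. Qed.

End BilinearMaps.

Section NSFamilyAlgebra.
Variables (K : pzRingType) (D : lmodType K) (Omega : Type).
Variables (mul : Omega -> Omega -> Omega).
Variables (prec succ : Omega -> D -> D -> D) (vee : Omega -> Omega -> D -> D -> D).
Hypothesis NS : is_NS_family_algebra mul prec succ vee.

Local Notation star := (NS_star prec succ vee).

Lemma NS_star_bilinear a b : bilinear_map (star a b).
Proof.
have [prec_bil succ_bil vee_bil _] := NS.
by apply: bilinear_map_add => //; apply: bilinear_map_add.
Qed.

Lemma NS_star_assoc x y z a b c :
  star (mul a b) c (star a b x y) z = star a (mul b c) x (star b c y z).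
Proof.
have [prec_bil succ_bil _ [prec_prec prec_succ succ_star vee_star]] := NS.
rewrite [LHS]/NS_star [in prec c _ z]/NS_star !(bilinear_mapDl (prec_bil c)).
(* Axioms (1)-(3) absorb the expanded prec- and succ-parts; the leftover
   [prec c (vee a b x y) z] pairs with the vee-part for axiom (4). *)
rewrite prec_prec prec_succ succ_star.
rewrite [LHS](@GRing.add D).[ACl (1*2*4*(5*3))] vee_star.
by rewrite [RHS]/NS_star !(bilinear_mapDr (succ_bil a)) !addrA.
Qed.

End NSFamilyAlgebra.

Theorem proposition4p2 (K : fieldType) (D : lmodType K)
  (Omega : Type) (mul : Omega -> Omega -> Omega)
  (prec succ : Omega -> D -> D -> D) (vee : Omega -> Omega -> D -> D -> D) :
  semigroup_assoc mul ->
  is_NS_family_algebra mul prec succ vee ->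
  is_Omega_associative_algebra mul (NS_star prec succ vee).
Proof.
(* The indices in the NS axioms already match up. *)
move=> _ NS; split=> [a b | x y z a b c].
- exact: (NS_star_bilinear NS).
- exact: (NS_star_assoc NS).
Qed.
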